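(* Let $c=(L,A)$ be a layered architecture configuration and $l\in L$. Then for every port $p\in O_l^*$ (the attachment-closure of the output ports of $l$), we have $\pi_c(p)\,\to_c^*\,l$, i.e. the layer owning $p$ is related to $l$ by the reflexive-transitive closure of the syntactic dependency relation.
   Context: Fix a set $\mathtt{SERVICE}$ of services and a set $\mathtt{PORT}$ of ports, with a function $\mathit{type}\colon\mathtt{PORT}\to\mathcal{P}(\mathtt{SERVICE})$, and a partition $\mathtt{PORT}=\mathcal{I}\cup\mathcal{O}$, $\mathcal{I}\cap\mathcal{O}=\emptyset$, into input ports and output ports. For $P\subseteq\mathtt{PORT}$, $\overline{P}=\prod_{p\in P}\mathit{type}(p)$ is the set of valuations of $P$. A layer is a triple $l=(I_l,O_l,f_l)$ with $I_l\subseteq\mathcal{I}$, $O_l\subseteq\mathcal{O}$, $f_l\colon\overline{I_l}\to\mathcal{P}(\overline{O_l})$. A layered architecture configuration is a pair $c=(L,A)$, $L$ a set of layers, $A$ a partial map from $\bigcup_{l\in L}I_l$ to $\bigcup_{l\in L}O_l$, such that distinct layers of $L$ share no ports (for $k\neq l$ in $L$, $(I_k\cup O_k)\cap(I_l\cup O_l)=\emptyset$) and $\mathit{type}(A(i))\subseteq\mathit{type}(i)$ whenever $A(i)$ is defined. Write $\mathrm{Ports}(c)=\bigcup_{l\in L}(I_l\cup O_l)$ and $\mathrm{Out}(c)=\bigcup_{l\in L}O_l$. For a port $p\in\mathrm{Ports}(c)$, $\pi_c(p)$ denotes the unique layer $l\in L$ with $p\in I_l\cup O_l$. The attachment-closure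 of $l\in L$ is the smallest set $O_l^*\subseteq\mathrm{Ports}(c)$ (intersection of all such sets) such that $O_l\subseteq O_l^*$; whenever $A(i)=o$ and $i\in O_l^*$ then $o\in O_l^*$; and whenever $o\in\mathrm{Out}(c)\cap O_l^*$ then $I_{\pi_c(o)}\subseteq O_l^*$. Syntactic dependency is the relation $\to_c\subseteq L\times L$ with $l\to_c l'$ iff there exist $o\in O_l$ and $i\in I_{l'}$ with $A(i)=o$; $\to_c^*$ denotes its reflexive-transitive closure. *)

From Stdlib Require Import Relations.Relation_Operators.

Set Implicit Arguments.

Section Arch.
Variables (SERVICE PORT : Type).
Variable type : PORT -> SERVICE -> Prop.
Variable isInput : PORT -> Prop.

Definition isOutput (p : PORT) : Prop := ~ isInput p.

Definition valuation (P : PORT -> Prop) : Type :=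
  forall p : {p : PORT | P p}, {s : SERVICE | type (proj1_sig p) s}.

(* a layer (I_l, O_l, f_l), f_l : val(I_l) -> P(val(O_l)) *)
Record layer : Type := Layer {
  lI : PORT -> Prop;
  lO : PORT -> Prop;
  lf : valuation lI -> (valuation lO -> Prop)
}.

Definition is_layer (l : layer) : Prop :=
  (forall p, lI l p -> isInput p) /\ (forall p, lO l p -> isOutput p).

Record config : Type := Config {
  cL : layer -> Prop;
  cA : PORT -> option PORT
}.

Definition Ports (c : config) (p : PORT) : Prop :=
  exists l, cL c l /\ (lI l p \/ lO l p).

Definition Out (c : config) (p : PORT) : Prop :=
  exists l, cL c l /\ lO l p.

Definition is_config (c : config) : Prop :=
  (forall l, cL c l -> is_layer l) /\
  (forall i o, cA c i = Some o ->
     (exists l, cL c l /\ lI l i) /\ (exists l, cL c l /\ lO l o)) /\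
  (forall k l, cL c k -> cL c l -> k <> l ->
     forall p, (lI k p \/ lO k p) -> ~ (lI l p \/ lO l p)) /\
  (forall i o, cA c i = Some o -> forall s, type o s -> type i s).

(* owner c p k  <->  k = pi_c(p), i.e. k is the (unique) layer of L owning p *)
Definition owner (c : config) (p : PORT) (k : layer) : Prop :=
  cL c k /\ (lI k p \/ lO k p).

Definition att_closed (c : config) (l : layer) (S : PORT -> Prop) : Prop :=
  (forall p, S p -> Ports c p) /\
  (forall p, lO l p -> S p) /\
  (forall i o, cA c i = Some o -> S i -> S o) /\
  (forall o, Out c o -> S o -> forall k, owner c o k -> forall i, lI k i -> S i).

(* O_l^* : intersection of all such sets *)
Definition att_closure (c : config) (l : layer) (p : PORT) : Prop :=
  forall S, att_closed c l S -> S p.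

Definition dep (c : config) (k l : layer) : Prop :=
  cL c k /\ cL c l /\
  exists o i, lO k o /\ lI l i /\ cA c i = Some o.

Definition dep_star (c : config) : layer -> layer -> Prop :=
  clos_refl_trans layer (dep c).

End Arch.

From Stdlib Require Import Relations.Relation_Operators Classical.

Set Implicit Arguments.

(* Since ports determine their layers uniquely, the set of ports whose owner
   depends on [l] is itself attachment-closed: an attachment [A i = o] is a
   dependency edge from the owner of [o] to the owner of [i], and the inputs of a
   layer share their owner. Hence it contains the least such set [O_l^*]. *)

Section AttachmentClosure.

Variables (SERVICE PORT : Type) (type : PORT -> SERVICE -> Prop).
Variable isInput : PORT -> Prop.
Variable c : config type.
Hypothesis Hc : is_config isInput c.
Variable l : layer type.
Hypothesis Hl : cL c l.

Lemma owner_unique (p : PORT) (k k' : layer type) :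
  owner c p k -> owner c p k' -> k = k'.
Proof.
  intros [Hk Hpk] [Hk' Hpk'].
  destruct (classic (k = k')) as [Heq | Hneq]; [exact Heq |].
  destruct Hc as (_ & _ & Hdisjoint & _).
  exfalso; exact (Hdisjoint k k' Hk Hk' Hneq p Hpk Hpk').
Qed.

Definition owner_depends_on_l (p : PORT) : Prop :=
  (exists k, owner c p k) /\ (forall k, owner c p k -> dep_star c k l).

Lemma owner_depends_on_l_intro (p : PORT) (k : layer type) :
  owner c p k -> dep_star c k l -> owner_depends_on_l p.
Proof.
  intros Hown Hdep; split; [now exists k |].
  intros k' Hown'; now rewrite (owner_unique Hown' Hown).
Qed.

Lemma att_closed_owner_depends_on_l : att_closed c l owner_depends_on_l.
Proof.
  split; [| split; [| split]].
  - intros p [[k [Hk Hpk]] _]; now exists k.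
  - intros o Ho.
    apply owner_depends_on_l_intro with l; [now split; auto | apply rt_refl].
  - intros i o HA [[ki Hki] Hi].
    destruct Hc as (_ & Hattach & _).
    destruct (Hattach i o HA) as [[li [Hli Hili]] [lo [Hlo Holo]]].
    apply owner_depends_on_l_intro with lo; [now split; auto |].
    apply rt_trans with li.
    + apply rt_step; repeat split; auto; now exists o, i.
    + apply Hi; now split; auto.
  - intros o _ [_ Ho] k Hok i Hi.
    apply owner_depends_on_l_intro with k.
    + destruct Hok; now split; auto.
    + now apply Ho.
Qed.

End AttachmentClosure.

Theorem mainTheorem2 (SERVICE PORT : Type) (type : PORT -> SERVICE -> Prop)
  (isInput : PORT -> Prop) (c : @config SERVICE PORT type)
  (Hc : is_config isInput c) (l : @layer SERVICE PORT type) (Hl : cL c l) :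
  forall p, att_closure c l p ->
    (exists k, owner c p k) /\
    (forall k, owner c p k -> dep_star c k l).
Proof.
  intros p Hp.
  exact (Hp _ (att_closed_owner_depends_on_l Hc l Hl)).
Qed.
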